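(* Let $\mathcal{X}=\{1,\dots,n\}$, let $\pi$ be a strictly positive probability distribution on $\mathcal{X}$, let $P$ be a transition matrix with $\pi P=\pi$, let $2\le k\le n$ and $\alpha\in[0,1]$. For a partition $(\mathcal{O}_i)_{i=1}^k$ of $\mathcal{X}$ into nonempty proper subsets let $A_\alpha=\alpha P+(1-\alpha)G$ with $G$ its Gibbs kernel. Then $$\min_{\mathcal{O}_1,\dots,\mathcal{O}_k}\mathrm{KL}_\pi(A_\alpha\|\Pi)\le\alpha\,\mathrm{KL}_\pi(P\|\Pi)-(1-\alpha)\Big(\sum_{i=1}^{k-1}\pi(i)\log\pi(i)+\Big(\sum_{j=k}^n\pi(j)\Big)\log\sum_{j=k}^n\pi(j)\Big).$$
   Context: Gibbs kernel: $G(x,y)=\pi(y)/\pi(\mathcal{O}(x))$ if $y\in\mathcal{O}(x)$ and $0$ otherwise, $\mathcal{O}(x)$ the block containing $x$, $\pi(\mathcal{O})=\sum_{z\in\mathcal{O}}\pi(z)$. $\Pi$ is the matrix with every row equal to $\pi$. $\mathrm{KL}_\pi(P\|Q)=\sum_{x,y}\pi(x)P(x,y)\log\frac{P(x,y)}{Q(x,y)}$ with $0\log(0/a)=0$. *)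

From HB Require Import structures.
From mathcomp Require Import all_boot all_order all_algebra.
From mathcomp Require Import all_classical all_reals.
From mathcomp Require Import exp.
Set Implicit Arguments. Unset Strict Implicit. Unset Printing Implicit Defensive.
Import Order.TTheory GRing.Theory Num.Theory.
Local Open Scope ring_scope.

Section Defs.
Variables (R : realType) (n : nat).

Definition pos_distr (pi : 'rV[R]_n) : Prop :=
  (forall x, 0 < pi 0 x) /\ \sum_x pi 0 x = 1.

Definition stochastic (P : 'M[R]_n) : Prop :=
  (forall x y, 0 <= P x y) /\ (forall x, \sum_y P x y = 1).

Definition Pimx (pi : 'rV[R]_n) : 'M[R]_n := \matrix_(x, y) pi 0 y.

Definition pimass (pi : 'rV[R]_n) (O : {set 'I_n}) : R := \sum_(z in O) pi 0 z.

Definition gibbs (pi : 'rV[R]_n) (Q : {set {set 'I_n}}) : 'M[R]_n :=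
  \matrix_(x, y) (if y \in finset.pblock Q x then pi 0 y / pimass pi (finset.pblock Q x) else 0).

Definition KLpi (pi : 'rV[R]_n) (P Q : 'M[R]_n) : R :=
  \sum_x \sum_y (if P x y == 0 then 0 else pi 0 x * P x y * ln (P x y / Q x y)).

Definition kpartition (k : nat) (Q : {set {set 'I_n}}) : Prop :=
  finset.partition Q [set: 'I_n] /\ #|Q| = k /\ (forall B, B \in Q -> B != [set: 'I_n]).

End Defs.

From HB Require Import structures.
From mathcomp Require Import all_boot all_order all_algebra.
From mathcomp Require Import all_classical all_reals.
From mathcomp Require Import exp.
From mathcomp Require Import zify ring lra.
Set Implicit Arguments. Unset Strict Implicit. Unset Printing Implicit Defensive.
Import Order.TTheory GRing.Theory Num.Theory.
Local Open Scope ring_scope.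

(* Lump the states into the singletons {i}, i < k-1, and the tail {j | k-1 <= j}.
   Since t |-> t ln (t / c) is convex, KL_pi(. || Pi) is convex in its first
   argument, so KL(A_alpha) <= alpha KL(P) + (1 - alpha) KL(G).  On the block O(x)
   the Gibbs kernel is pi(y) / pi(O(x)), hence KL(G || Pi) = - sum_x pi(x) ln pi(O(x)),
   the entropy of the lumped distribution, which for this partition is the bracketed
   term. *)

Section KLTerm.
Variable R : realType.

Definition kl_term (c t : R) : R := t * ln (t / c).

Lemma kl_term_tangent (a m c : R) : 0 <= a -> 0 < m -> 0 < c ->
  a * ln (m / c) + (a - m) <= kl_term c a.
Proof.
move=> a_ge0 m_gt0 c_gt0; rewrite /kl_term.
have [->|a_neq0] := eqVneq a 0; first by rewrite !mul0r; lra.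
have a_gt0 : 0 < a by rewrite lt0r a_neq0.
have ln_ma : ln (m / a) <= m / a - 1.
  have := @le_ln1Dx R (m / a - 1); rewrite addrCA subrr addr0; apply.
  by have := divr_gt0 m_gt0 a_gt0; lra.
have := ler_wpM2l a_ge0 ln_ma.
rewrite !ln_div ?posrE // mulrBr mulrBr mulr1 mulrCA divff ?gt_eqF // mulr1.
lra.
Qed.

Lemma kl_term_convex (t a b c : R) : 0 <= t <= 1 -> 0 <= a -> 0 <= b -> 0 < c ->
  kl_term c (t * a + (1 - t) * b) <= t * kl_term c a + (1 - t) * kl_term c b.
Proof.
move=> /andP[t_ge0 t_le1] a_ge0 b_ge0 c_gt0.
have ta_ge0 : 0 <= t * a by apply: mulr_ge0.
have tb_ge0 : 0 <= (1 - t) * b by apply: mulr_ge0; lra.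
set m := t * a + (1 - t) * b.
have [m0|m_neq0] := eqVneq m 0.
  move: (m0) => /eqP; rewrite paddr_eq0 // => /andP[/eqP ta0 /eqP tb0].
  by rewrite /kl_term m0 mul0r !mulrA ta0 tb0 !mul0r addr0.
have m_gt0 : 0 < m by rewrite lt0r m_neq0 addr_ge0.
(* Average the tangent inequalities at [m]: the linear terms [a - m], [b - m] cancel. *)
have -> : kl_term c m = t * (a * ln (m / c) + (a - m)) + (1 - t) * (b * ln (m / c) + (b - m)).
  by rewrite /kl_term {1 4 6}/m; ring.
apply: lerD; apply: ler_wpM2l; rewrite ?subr_ge0 //; exact: kl_term_tangent.
Qed.

End KLTerm.

Section KLpi.
Variables (R : realType) (n : nat) (pi : 'rV[R]_n).

Lemma KLpiE (M C : 'M[R]_n) :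
  KLpi pi M C = \sum_x \sum_y pi 0 x * kl_term (C x y) (M x y).
Proof.
apply: eq_bigr => x _; apply: eq_bigr => y _; rewrite /kl_term mulrA.
by case: eqP => [->|_]; rewrite ?(mul0r, mulr0).
Qed.

Lemma KLpi_convex (t : R) (M N C : 'M[R]_n) :
  0 <= t <= 1 -> (forall x, 0 <= pi 0 x) ->
  (forall x y, 0 <= M x y) -> (forall x y, 0 <= N x y) -> (forall x y, 0 < C x y) ->
  KLpi pi (t *: M + (1 - t) *: N) C <= t * KLpi pi M C + (1 - t) * KLpi pi N C.
Proof.
move=> t01 pi_ge0 M_ge0 N_ge0 C_gt0; rewrite !KLpiE !mulr_sumr -big_split.
apply: ler_sum => x _; rewrite !mulr_sumr -big_split; apply: ler_sum => y _.
rewrite /= !mxE [t * (pi 0 x * _)]mulrCA [(1 - t) * (pi 0 x * _)]mulrCA -mulrDr.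
by apply: ler_wpM2l => //; apply: kl_term_convex.
Qed.

Lemma gibbs_ge0 (Q : {set {set 'I_n}}) x y :
  (forall z, 0 <= pi 0 z) -> 0 <= gibbs pi Q x y.
Proof.
move=> pi_ge0; rewrite mxE; case: ifP => // _.
by apply: divr_ge0 => //; rewrite /pimass sumr_ge0.
Qed.

Lemma KLpi_gibbs (Q : {set {set 'I_n}}) :
  (forall x, 0 < pi 0 x) -> finset.partition Q [set: 'I_n] ->
  KLpi pi (gibbs pi Q) (Pimx pi) = - \sum_x pi 0 x * ln (pimass pi (finset.pblock Q x)).
Proof.
move=> pi_gt0 /and3P[/eqP coverQ _ _]; rewrite KLpiE -sumrN.
apply: eq_bigr => x _; set B := finset.pblock Q x; set m := pimass pi B.
have m_gt0 : 0 < m.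
  have x_in_B : x \in B by rewrite mem_pblock coverQ inE.
  rewrite /m /pimass (bigD1 x) //= ltr_pwDl // sumr_ge0 // => y _; exact: ltW.
rewrite (bigID [in B]) /= [X in _ + X]big1 ?addr0 => [|y /negbTE y_notin_B]; last first.
  by rewrite !mxE -/B y_notin_B /kl_term !mul0r mulr0.
(* On its block, [gibbs pi Q x y / pi y = 1 / m]; what remains sums [pi y] over [B], i.e. [m]. *)
rewrite -mulrN -mulr_sumr; congr (_ * _).
transitivity (\sum_(y in B) pi 0 y * (- ln m / m)).
  apply: eq_bigr => y y_in_B; rewrite !mxE -/B y_in_B /kl_term.
  rewrite -/m [pi 0 y / m / _]mulrAC divff ?gt_eqF // mul1r lnV ?posrE //; lra.
by rewrite -mulr_suml mulrCA divff ?gt_eqF ?mulr1.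
Qed.

End KLpi.

Section PreimPartition.
Variable T : finType.

Lemma card_preim_partition (rT : finType) (f : T -> rT) (D : {set T}) :
  #|preim_partition f D| = #|f @: D|.
Proof.
pose cls c := [set y in D | c == f y].
have -> : preim_partition f D = cls @: (f @: D).
  by rewrite -imset_comp; apply: eq_imset.
apply: card_in_imset => _ _ /imsetP[x Dx ->] /imsetP[y Dy ->] /finset.setP/(_ x).
by rewrite !inE Dx eqxx => /esym/eqP.
Qed.

Lemma partition_proper (P : {set {set T}}) (D B : {set T}) :
  finset.partition P D -> (1 < #|P|)%N -> B \in P -> B != D.
Proof.
move=> /and3P[/eqP coverP trivP P_not0] P_gt1 PB; apply/eqP => BD; subst B.
have [C PDC] : exists C, C \in P :\ D.
  by apply/finset.set0Pn; rewrite -card_gt0; move: P_gt1; rewrite (cardsD1 D) PB.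
move: PDC; rewrite !inE => /andP[CD PC].
have /finset.trivIsetP/(_ C D PC PB CD)/disjoint_setI0 CD0 := trivP.
have C_sub_D : C \subset D by rewrite -coverP (bigcup_max C).
by move: P_not0; rewrite -CD0 (finset.setIidPl C_sub_D) PC.
Qed.

End PreimPartition.

Section ClampPartition.
Variables (n k : nat).

Definition clamp (x : 'I_n) : 'I_k.-1.+1 := inord (minn x k.-1).

Lemma clampE x : clamp x = minn x k.-1 :> nat.
Proof. by rewrite inordK // ltnS geq_minr. Qed.

Definition clamp_partition : {set {set 'I_n}} := preim_partition clamp [set: 'I_n].

Lemma mem_pblock_clamp x y :
  (y \in finset.pblock clamp_partition x) = (minn x k.-1 == minn y k.-1).
Proof.
rewrite pblock_equivalence_partition ?inE //; last by split=> // /eqP->.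
by rewrite -val_eqE /= !clampE.
Qed.

Lemma kpartition_clamp : (2 <= k)%N -> (k <= n)%N -> kpartition k clamp_partition.
Proof.
move=> k_ge2 k_le_n.
have k_gt0 : (0 < k)%N by rewrite ltnW.
have clamp_onto : clamp @: [set: 'I_n] = [set: 'I_k.-1.+1].
  apply/finset.setP => c; rewrite !inE.
  have c_lt_n : (c < n)%N by rewrite (leq_trans (ltn_ord c)) // prednK.
  apply/imsetP; exists (Ordinal c_lt_n) => //; apply: val_inj.
  by rewrite /= clampE; apply/esym/minn_idPl; rewrite -ltnS; exact: ltn_ord c.
have card_clamp : #|clamp_partition| = k.
  by rewrite card_preim_partition clamp_onto cardsT card_ord prednK.
split; first exact: preim_partitionP.
split=> // B QB; apply: partition_proper QB; first exact: preim_partitionP.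
by rewrite card_clamp.
Qed.

Lemma sum_ln_pimass_clamp (R : realType) (pi : 'rV[R]_n) :
  \sum_x pi 0 x * ln (pimass pi (finset.pblock clamp_partition x))
  = \sum_(i < n | (i < k.-1)%N) pi 0 i * ln (pi 0 i)
    + (\sum_(j < n | (k.-1 <= j)%N) pi 0 j) * ln (\sum_(j < n | (k.-1 <= j)%N) pi 0 j).
Proof.
rewrite (bigID (fun x : 'I_n => (x < k.-1)%N)) /=; congr (_ + _).
  apply: eq_bigr => x x_lt; rewrite /pimass (big_pred1 x) // => y.
  by rewrite mem_pblock_clamp /pred1 /= -val_eqE /=; apply/eqP/eqP; lia.
rewrite mulr_suml; apply: eq_big => [x|x x_ge]; first by rewrite -leqNgt.
congr (_ * ln _); apply: eq_bigl => y.
by move: x_ge; rewrite mem_pblock_clamp -leqNgt => x_ge; apply/eqP/idP; lia.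
Qed.

End ClampPartition.

Theorem corollary5p5 (R : realType) (n k : nat) (pi : 'rV[R]_n) (P : 'M[R]_n)
    (alpha : R) :
  pos_distr pi -> stochastic P -> pi *m P = pi ->
  (2 <= k)%N -> (k <= n)%N -> 0 <= alpha <= 1 ->
  exists Q : {set {set 'I_n}}, kpartition k Q /\
    KLpi pi (alpha *: P + (1 - alpha) *: gibbs pi Q) (Pimx pi)
    <= alpha * KLpi pi P (Pimx pi)
       - (1 - alpha) *
         ((\sum_(i < n | (i < k.-1)%N) pi 0 i * ln (pi 0 i))
          + (\sum_(j < n | (k.-1 <= j)%N) pi 0 j)
            * ln (\sum_(j < n | (k.-1 <= j)%N) pi 0 j)).
Proof.
move=> [pi_gt0 _] [P_ge0 _] _ k_ge2 k_le_n alpha01.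
have pi_ge0 x : 0 <= pi 0 x by exact: ltW.
exists (clamp_partition n k); split; first exact: kpartition_clamp.
rewrite -sum_ln_pimass_clamp -mulrN -KLpi_gibbs //; last exact: preim_partitionP.
apply: KLpi_convex => // [x y | x y]; first exact: gibbs_ge0.
by rewrite mxE.
Qed.
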